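(* Let $M$ be a sofic monoid, let $\Sigma=(D_i,\sigma_i)_{i\in I}$ be a sofic approximation of $M$, let $A$ be a finite set, and let $X\subset A^M$ be a subshift. Then $h_\Sigma(X,M,\rho)\le\log|A|$, where $\rho$ is the pseudometric on $X$ given by $\rho(x,y)=0$ if $x(1_M)=y(1_M)$ and $\rho(x,y)=1$ otherwise.
   Context: $A^M$ is the set of maps $M\to A$ with the prodiscrete topology and shift action $(mx)(m')=x(m'm)$; a subshift is a closed $M$-invariant subset. Hamming metric on $\operatorname{Map}(D)$ (maps $D\to D$, $D$ finite non-empty): $d_D^{\mathrm{Ham}}(f,g)=\frac{1}{|D|}|\{v:f(v)\ne g(v)\}|$. A sofic approximation of $M$ is a net $(D_i,\sigma_i)_{i\in I}$ over a directed set, $D_i$ non-empty finite, $\sigma_i\colon M\to\operatorname{Map}(D_i)$, with $\sigma_i(1_M)=\mathrm{Id}_{D_i}$, $\lim_i d^{\mathrm{Ham}}_{D_i}(\sigma_i(m_1m_2),\sigma_i(m_1)\sigma_i(m_2))=0$ for all $m_1,m_2$, and $\lim_i d^{\mathrm{Ham}}_{D_i}(\sigma_i(m_1),\sigma_i(m_2))=1$ for distinct $m_1,m_2$; $M$ is sofic iff it admits one. For a compact space $X$ with continuous $M$-action and continuous pseudometric $\rho$, and non-empty finite $D$: on $X^D$, $\rho_2^D(\varphi,\psi)=(\frac{1}{|D|}\sum_v\rho(\varphi(v),\psi(v))^2)^{1/2}$, $\rho_\infty^D(\varphi,\psi)=\max_v\rho(\varphi(v),\psi(v))$, $(m\varphi)(v)=m\varphi(v)$;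 for finite $F\subset M$, $\delta>0$, $\sigma\colon M\to\operatorname{Map}(D)$: $\operatorname{Map}(X,M,\rho,F,\delta,\sigma)=\{\varphi\in X^D:\rho_2^D(\varphi\circ\sigma(m),m\varphi)\le\delta\ \forall m\in F\}$. $N_\varepsilon(Z,d)$ is the maximal cardinality of a subset of $Z$ with pairwise $d$-distances $\ge\varepsilon$. $h_\Sigma(X,M,\rho)=\sup_{\varepsilon>0}\inf_F\inf_{\delta>0}\limsup_i\frac{1}{|D_i|}\log N_\varepsilon(\operatorname{Map}(X,M,\rho,F,\delta,\sigma_i),\rho_\infty^{D_i})$, infimum over finite $F\subset M$, $\log 0=-\infty$. *)

From HB Require Import structures.
From mathcomp Require Import all_boot all_order all_algebra.
From mathcomp Require Import all_classical all_reals all_analysis.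
Set Implicit Arguments. Unset Strict Implicit. Unset Printing Implicit Defensive.
Import Order.TTheory GRing.Theory Num.Theory.
Local Open Scope classical_set_scope.
Local Open Scope ring_scope.

Definition is_monoid (M : Type) (mul : M -> M -> M) (one : M) : Prop :=
  [/\ forall a b c, mul a (mul b c) = mul (mul a b) c,
      forall a, mul one a = a & forall a, mul a one = a].

Definition is_directed (I : Type) (le : I -> I -> Prop) : Prop :=
  [/\ inhabited I, forall i, le i i,
      forall i j k, le i j -> le j k -> le i k &
      forall i j, exists k, le i k /\ le j k].

Definition net_lim (R : realType) (I : Type) (le : I -> I -> Prop)
  (a : I -> R) (l : R) : Prop :=
  forall e : R, 0 < e -> exists i0, forall i, le i0 i -> `|a i - l| < e.

Definition net_limsup (R : realType) (I : Type) (le : I -> I -> Prop)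
  (a : I -> \bar R) : \bar R :=
  ereal_inf [set ereal_sup [set a j | j in [set j | le i j]] | i in [set: I]].

Definition dham (R : realType) (D : finType) (f g : D -> D) : R :=
  (#|[set v : D | f v != g v]|%:R) / (#|D|%:R).

Definition sofic_approx (R : realType) (M : Type) (mul : M -> M -> M) (one : M)
  (I : Type) (le : I -> I -> Prop) (D : I -> finType)
  (sigma : forall i, M -> D i -> D i) : Prop :=
  [/\ is_directed le,
      forall i, (0 < #|D i|)%N,
      forall i, sigma i one = id,
      forall m1 m2, net_lim le
        (fun i => dham R (sigma i (mul m1 m2)) (sigma i m1 \o sigma i m2)) 0 &
      forall m1 m2, m1 <> m2 ->
        net_lim le (fun i => dham R (sigma i m1) (sigma i m2)) 1].

Definition shift (M A : Type) (mul : M -> M -> M) (m : M) (x : M -> A) : M -> A :=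
  fun m' => x (mul m' m).

(* closed in the prodiscrete topology on A^M (A discrete), written out:
   any x all of whose finite restrictions are matched by points of X lies in X *)
Definition prodiscrete_closed (M A : Type) (X : set (M -> A)) : Prop :=
  forall x : M -> A,
    (forall F : set M, finite_set F ->
       exists2 y, X y & forall m, F m -> y m = x m) -> X x.

Definition subshift (M A : Type) (mul : M -> M -> M) (X : set (M -> A)) : Prop :=
  prodiscrete_closed X /\ forall m x, X x -> X (shift mul m x).

Section Entropy.
Variables (R : realType) (M : Type) (mul : M -> M -> M) (one : M) (A : finType).
Variable (X : set (M -> A)).

Definition rho0 (x y : M -> A) : R := if x one == y one then 0 else 1.

Definition rho2 (D : finType) (phi psi : D -> M -> A) : R :=
  Num.sqrt ((#|D|%:R)^-1 * \sum_(v : D) (rho0 (phi v) (psi v)) ^+ 2).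

Definition rhoinf (D : finType) (phi psi : D -> M -> A) : R :=
  \big[Num.max/0]_(v : D) rho0 (phi v) (psi v).

Definition MapSet (F : set M) (delta : R) (D : finType) (sigma : M -> D -> D)
  : set (D -> M -> A) :=
  [set phi | (forall v, X (phi v)) /\
     forall m, F m -> rho2 (phi \o sigma m) (fun v => shift mul m (phi v)) <= delta].

Definition Nsep (T : Type) (eps : R) (Z : set T) (d : T -> T -> R) : \bar R :=
  ereal_sup [set (n%:R)%:E | n in [set n : nat | exists f : 'I_n -> T,
     (forall k, Z (f k)) /\ (forall k l, k != l -> eps <= d (f k) (f l))]].

Definition elog (x : \bar R) : \bar R :=
  match x with
  | EFin r => if r <= 0 then -oo%E else (ln r)%:E
  | +oo%E => +oo%E
  | -oo%E => -oo%E
  end.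

Definition sofic_entropy (I : Type) (le : I -> I -> Prop) (D : I -> finType)
  (sigma : forall i, M -> D i -> D i) : \bar R :=
  ereal_sup [set
    ereal_inf [set
      ereal_inf [set
        net_limsup le (fun i =>
          (((#|D i|%:R : R)^-1)%:E *
             elog (Nsep eps (MapSet F delta (sigma i)) (@rhoinf (D i))))%E)
      | delta in [set delta : R | 0 < delta]]
    | F in [set F : set M | finite_set F]]
  | eps in [set eps : R | 0 < eps]].
End Entropy.

From HB Require Import structures.
From mathcomp Require Import all_boot all_order all_algebra.
From mathcomp Require Import all_classical all_reals all_analysis.
Local Open Scope classical_set_scope.
Local Open Scope ring_scope.
Import Order.TTheory GRing.Theory Num.Theory.

(* Maps phi, psi : D -> X with the same pattern v |-> phi v (1_M) in A^D are at
   rho_infinity-distance 0, so an eps-separated family (eps > 0) injects into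
   A^D.  Hence N_eps <= |A|^|D| and (1/|D|) log N_eps <= log |A| at every stage,
   whatever F, delta and i; the bound passes through the limsup, the infima and
   the supremum. *)

Lemma le_elog {R : realType} {x y : \bar R} : (x <= y)%E -> (elog x <= elog y)%E.
Proof.
case: x => [r| |]; case: y => [s| |] //=; rewrite ?leey ?leNye // lee_fin => rs.
case: ifP => r0; first by rewrite leNye.
have s0 : ~~ (s <= 0) by apply: contraFN r0 => s0; apply: le_trans rs s0.
by rewrite (negbTE s0) lee_fin ler_ln // posrE ltNge ?r0 ?s0.
Qed.

Lemma elog_natrX {R : realType} (n k : nat) : (0 < k)%N ->
  elog ((n ^ k)%:R : R)%:E = ((k%:R : R)%:E * elog (n%:R : R)%:E)%E.
Proof.
move=> k0; case: (posnP n) => [->|n0] /=.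
  by rewrite exp0n // lexx gt0_muleNy ?lte_fin ?ltr0n.
have nR : (0 < n%:R :> R) by rewrite ltr0n.
by rewrite natrX !leNgt exprn_gt0 // nR /= lnXn // -EFinM mulr_natl.
Qed.

Lemma Nsep_le_card {R : realType} {T : Type} {K : finType} (g : T -> K)
    (eps : R) (Z : set T) (d : T -> T -> R) :
  (forall x y, g x = g y -> d x y < eps) -> (Nsep eps Z d <= (#|K|%:R)%:E)%E.
Proof.
move=> gd; apply: ge_ereal_sup => _ [n [f [_ sep_f]] <-].
rewrite lee_fin ler_nat -[X in (X <= _)%N]card_ord.
apply: (@leq_card _ _ (g \o f)) => k l gfkl; apply/eqP; apply: contraT => kl.
by have := sep_f k l kl; rewrite leNgt gd.
Qed.

Lemma rhoinf_eq0 (R : realType) (M : Type) (one : M) (A D : finType)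
    (phi psi : D -> M -> A) :
  (forall v, phi v one = psi v one) -> rhoinf R one phi psi = 0.
Proof.
move=> same; rewrite /rhoinf; elim/big_rec: _ => // v x _ ->.
by rewrite /rho0 same eqxx maxxx.
Qed.

Lemma Nsep_rhoinf_le {R : realType} {M : Type} (one : M) {A D : finType}
    {eps : R} (Z : set (D -> M -> A)) :
  0 < eps -> (Nsep eps Z (@rhoinf R M one A D) <= ((#|A| ^ #|D|)%N%:R)%:E)%E.
Proof.
move=> eps0; rewrite -card_ffun.
apply: (Nsep_le_card (fun phi : D -> M -> A => [ffun v => phi v one]))
  => phi psi same.
rewrite rhoinf_eq0 // => v.
by have := congr1 (fun h : {ffun D -> A} => h v) same; rewrite !ffunE.
Qed.

Lemma normalized_elog_Nsep_le (R : realType) (M : Type) (one : M) (A D : finType)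
    (eps : R) (Z : set (D -> M -> A)) :
  0 < eps -> (0 < #|D|)%N ->
  (((#|D|%:R : R)^-1)%:E * elog (Nsep eps Z (@rhoinf R M one A D))
    <= elog (#|A|%:R : R)%:E)%E.
Proof.
move=> eps0 D0; have DR : (0 < #|D|%:R :> R) by rewrite ltr0n.
have invD_ge0 : (0 <= ((#|D|%:R : R)^-1)%:E)%E by rewrite lee_fin invr_ge0 ltW.
apply: le_trans (lee_wpmul2l invD_ge0 (le_elog (Nsep_rhoinf_le one Z eps0))) _.
by rewrite elog_natrX // muleA -EFinM mulVf ?mul1e // lt0r_neq0.
Qed.

Lemma net_limsup_le (R : realType) (I : Type) (le : I -> I -> Prop)
    (a : I -> \bar R) (l : \bar R) :
  inhabited I -> (forall i, (a i <= l)%E) -> (net_limsup le a <= l)%E.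
Proof.
move=> [i0] al; apply: ge_ereal_inf; exists (ereal_sup [set a j | j in le i0]).
  by exists i0.
by apply: ge_ereal_sup => _ [j _ <-].
Qed.

Theorem lemma5p1 (R : realType) (M : Type) (mul : M -> M -> M) (one : M)
  (I : Type) (le : I -> I -> Prop) (D : I -> finType)
  (sigma : forall i, M -> D i -> D i) (A : finType) (X : set (M -> A)) :
  is_monoid mul one ->
  sofic_approx R mul one le sigma ->
  subshift mul X ->
  (sofic_entropy R mul one X le sigma <= elog ((#|A|%:R : R)%:E))%E.
Proof.
move=> _ [[I0 _ _ _] D0 _ _ _] _.
apply: ge_ereal_sup => _ [eps /= eps0 <-].
apply: ge_ereal_inf; eexists; first by exists set0 => //; exact: finite_set0.
apply: ge_ereal_inf; eexists; first by exists 1 => //; exact: ltr01.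
by apply: net_limsup_le => // i; exact: normalized_elog_Nsep_le.
Qed.
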